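(* Let $u$ be a coherent utility on $L^0$ with determining set $\mathcal{D}$, and let $Y$ be a random variable or random vector. Then for every $X\in L^1_s(\mathcal{D})\cap L^1_s(\mathsf{E}(\mathcal{D}\mid Y))\cap L^1$ we have $$u^f(X;Y)=u(\mathsf{E}(X\mid Y)).$$
   Context: Let $(\Omega,\mathcal{F},\mathsf{P})$ be a probability space, $L^0$ the space of all real random variables, $L^1=L^1(\mathsf{P})$, and $\mathcal{P}$ the set of probability measures on $\mathcal{F}$ absolutely continuous with respect to $\mathsf{P}$; measures $\mathsf{Q}\in\mathcal{P}$ are identified with their densities $Z=d\mathsf{Q}/d\mathsf{P}$. For $\mathsf{Q}\in\mathcal{P}$ and $X\in L^0$, $\mathsf{E}_\mathsf{Q}X:=\mathsf{E}_\mathsf{Q}X^+-\mathsf{E}_\mathsf{Q}X^-$ with the convention $\infty-\infty=-\infty$; $\mathsf{E}$ denotes expectation under $\mathsf{P}$. A coherent utility on $L^0$ is a map $u:L^0\to[-\infty,\infty]$ of the form $u(X)=\inf_{\mathsf{Q}\in\mathcal{D}}\mathsf{E}_\mathsf{Q}X$ for a nonempty $\mathcal{D}\subseteq\mathcal{P}$; its determining set is the largest such set, namely $\{\mathsf{Q}\in\mathcal{P}:\mathsf{E}_\mathsf{Q}X\ge u(X)\ \forall X\in L^0\}$. For a set $\mathcal{C}\subseteq\mathcal{P}$, $L^1_s(\mathcal{C})=\{X\in L^0:\lim_{n\to\infty}\sup_{\mathsf{Q}\in\mathcal{C}}\mathsf{E}_\mathsf{Q}|X|I(|X|>n)=0\}$.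 For a random vector $Y$, $\mathsf{E}(\mathcal{D}\mid Y):=\{\mathsf{E}(Z\mid Y):Z\in\mathcal{D}\}$ (again a subset of $\mathcal{P}$ via densities), and the factor utility is $u^f(X;Y):=\inf_{\mathsf{Q}\in\mathsf{E}(\mathcal{D}\mid Y)}\mathsf{E}_\mathsf{Q}X$. *)

From HB Require Import structures.
From mathcomp Require Import all_boot all_order all_algebra.
From mathcomp Require Import all_classical all_reals all_analysis.
Set Implicit Arguments. Unset Strict Implicit. Unset Printing Implicit Defensive.
Import Order.TTheory GRing.Theory Num.Theory.
Local Open Scope classical_set_scope.
Local Open Scope ring_scope.

Section Defs.
Context (d : measure_display) (T : measurableType d) (R : realType)
  (P : probability T R).

(* A measure Q << P identified with its density Z = dQ/dP. *)
Definition is_density (Z : T -> R) : Prop :=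
  [/\ measurable_fun setT Z, (forall x, 0 <= Z x) &
      (\int[P]_x (Z x)%:E = 1)%E].

(* E_Q X := E_Q X^+ - E_Q X^-, with the convention oo - oo = -oo. *)
Definition EQ (Z X : T -> R) : \bar R :=
  let a := (\int[P]_x (Z x * Num.max (X x) 0)%:E)%E in
  let b := (\int[P]_x (Z x * Num.max (- X x) 0)%:E)%E in
  if b == +oo%E then (-oo)%E else (a - b)%E.

Definition coherent_utility (u : (T -> R) -> \bar R) : Prop :=
  exists D0 : set (T -> R),
    [/\ D0 !=set0, (forall Z, D0 Z -> is_density Z) &
        forall X, measurable_fun setT X ->
          u X = ereal_inf [set EQ Z X | Z in D0]].

(* determining set: the largest such set *)
Definition determining_set (u : (T -> R) -> \bar R) : set (T -> R) :=
  [set Z | is_density Z /\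
     forall X, measurable_fun setT X -> (u X <= EQ Z X)%E].

Definition L1s (C : set (T -> R)) (X : T -> R) : Prop :=
  (fun n : nat => ereal_sup
     [set (\int[P]_x (Z x * (`|X x| * (if `|X x| > n%:R then 1 else 0)))%:E)%E
       | Z in C]) @ \oo --> 0%E.

Definition sigmaY (n : nat) (Y : 'I_n -> T -> R) : set (set T) :=
  <<s [set A | exists i B, measurable B /\ A = Y i @^-1` B] >>.

Definition cond_exp (n : nat) (Y : 'I_n -> T -> R) (V W : T -> R) : Prop :=
  [/\ P.-integrable setT (EFin \o V),
      P.-integrable setT (EFin \o W),
      (forall B : set R, measurable B -> sigmaY Y (W @^-1` B)) &
      forall A, sigmaY Y A ->
        (\int[P]_(x in A) (W x)%:E = \int[P]_(x in A) (V x)%:E)%E].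

Definition cond_set (n : nat) (Y : 'I_n -> T -> R) (D : set (T -> R))
  : set (T -> R) :=
  [set W | is_density W /\ exists2 Z, D Z & cond_exp Y Z W].

Definition factor_utility (u : (T -> R) -> \bar R) (n : nat)
  (Y : 'I_n -> T -> R) (X : T -> R) : \bar R :=
  ereal_inf [set EQ W X | W in cond_set Y (determining_set u)].

End Defs.

From HB Require Import structures.
From mathcomp Require Import all_boot all_order all_algebra.
From mathcomp Require Import all_classical all_reals all_analysis.
From mathcomp Require Import measurable_realfun lra.
Set Implicit Arguments. Unset Strict Implicit. Unset Printing Implicit Defensive.
Import Order.TTheory GRing.Theory Num.Theory.
Local Open Scope classical_set_scope.
Local Open Scope ring_scope.

(* Let W = E(X | Y) and, for Z in the determining set D, let Z' >= 0 be a
   version of E(Z | Y). Testing E[(X - W) 1_A] = 0 (A in sigma(Y)) against the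
   sigma(Y)-measurable Z' gives E[Z' W^+] + E[Z' X^-] = E[Z' X^+] + E[Z' W^-],
   and the tower property gives E[Z W^+-] = E[Z' W^+-]. Conditional Jensen
   bounds E[Z' W^+-] by E[Z' X^+-] <= E[Z' |X|], finite as X is in
   L^1_s(E(D | Y)); so all terms are finite and E_{Z'} X = E_Z W. Since a set
   defining u lies inside D, u(W) is the infimum of E_Z W over D, and by
   Radon-Nikodym on sigma(Y) every Z in D has such a Z'; hence both infima
   range over the same values. *)

Lemma fin_num_sube_eqE (R : realType) (a b c e : \bar R) :
  a \is a fin_num -> b \is a fin_num -> c \is a fin_num -> e \is a fin_num ->
  (a - b = c - e <-> a + e = c + b)%E.
Proof.
move=> fa fb fc fe; rewrite -(fineK fa) -(fineK fb) -(fineK fc) -(fineK fe).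
rewrite -!EFinB -!EFinD.
by split=> h; congr EFin; have := EFin_inj h; lra.
Qed.

Lemma funrpos_le_normr T (R : realDomainType) (f : T -> R) x : f^\+ x <= `|f x|.
Proof. by rewrite ge_max normr_ge0 ler_norm. Qed.

Lemma funrneg_le_normr T (R : realDomainType) (f : T -> R) x : f^\- x <= `|f x|.
Proof. by rewrite ge_max normr_ge0 -normrN ler_norm. Qed.

Section sigma_sub.
Context d (T : measurableType d) (R : realType) (G : set (set T)).
Hypothesis sGm : forall A, <<s G >> A -> measurable A.
Local Notation T' := (g_sigma_algebraType G).

Lemma measurable_fun_sigma_sub (g : T' -> R) :
  measurable_fun setT g -> measurable_fun setT (g : T -> R).
Proof. by move=> mg _ B mB; apply: sGm; exact: mg. Qed.

Section measure.
Variable mu : {measure set T -> \bar R}.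
Local Open Scope ereal_scope.

Definition cond_equiv (V V' : T -> R) := forall A, <<s G >> A ->
  \int[mu]_(x in A) (V x)%:E = \int[mu]_(x in A) (V' x)%:E.

Lemma integral_mulr_indic (V : T -> R) (A : set T) :
  \int[mu]_x (V x * \1_A x)%:E = \int[mu]_(x in A) (V x)%:E.
Proof.
rewrite [RHS]integral_mkcond epatch_indic.
by apply: eq_integral => x _; rewrite EFinM.
Qed.

Import HBNNSimple.

Lemma ge0_integral_mul_nnsfun (V : T -> R) (s : {nnsfun T' >-> R}) :
  measurable_fun setT V -> (forall x, 0 <= V x)%R ->
  \int[mu]_x (V x * s x)%:E =
  \sum_(y \in range s) y%:E * \int[mu]_(x in (s : T -> R) @^-1` [set y]) (V x)%:E.
Proof.
move=> mV V0.
have fs : finite_set (range s) by exact: fimfunP.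
have ms y : measurable ((s : T -> R) @^-1` [set y]).
  by apply: sGm; exact: (measurable_funPTI s (measurable_set1 y)).
have mVs y : measurable_fun setT (fun x => V x * \1_(s @^-1` [set y]) x)%R.
  by apply: measurable_funM => //; exact: measurable_indic.
under eq_integral => x _.
  rewrite (fimfunE s x) mulr_fsumr -fsumEFin//.
  over.
rewrite ge0_integral_fsum//; last first.
- move=> y x _; rewrite lee_fin indicE.
  case: (boolP (x \in _)) => [/set_mem <-|_]; last by rewrite !mulr0.
  by rewrite mulr1 mulr_ge0.
- move=> y; apply/measurable_EFinP; apply: measurable_funM => //.
  by apply: measurable_funM => //; exact: measurable_indic.
apply: eq_fsbigr => y /set_mem [x0 _ <-].
under eq_integral do rewrite mulrCA EFinM.
rewrite ge0_integralZl_EFin ?integral_mulr_indic//.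
- by move=> x _; rewrite lee_fin mulr_ge0.
- exact/measurable_EFinP.
Qed.

(* Approximate [g] from below by [<<s G >>]-simple functions, on whose level sets
   the two integrals agree, and pass to the limit by monotone convergence. *)
Lemma ge0_integral_mul_cond (V V' : T -> R) (g : T' -> R) :
  measurable_fun setT V -> measurable_fun setT V' ->
  (forall x, 0 <= V x)%R -> (forall x, 0 <= V' x)%R -> cond_equiv V V' ->
  (forall x, 0 <= g x)%R -> measurable_fun setT g ->
  \int[mu]_x (V x * g x)%:E = \int[mu]_x (V' x * g x)%:E.
Proof.
move=> mV mV' V0 V'0 eVV' g0 mg.
have mEg : measurable_fun setT (EFin \o g) by exact/measurable_EFinP.
pose h := nnsfun_approx (@measurableT _ T') mEg.
suff integral_lim (U : T -> R) : measurable_fun setT U -> (forall x, 0 <= U x)%R ->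
    \int[mu]_x (U x * g x)%:E = limn (fun n => \int[mu]_x (U x * h n x)%:E).
  rewrite !integral_lim//; congr (lim (_ @ \oo)); apply/funext => n.
  rewrite !ge0_integral_mul_nnsfun//; apply: eq_fsbigr => y _; rewrite eVV'//.
  exact: (measurable_funPTI (h n) (measurable_set1 y)).
move=> mU U0.
have mh n : measurable_fun setT (h n : T -> R).
  exact/measurable_fun_sigma_sub/measurable_funP.
rewrite -monotone_convergence//.
- apply: eq_integral => x _; apply/esym/cvg_lim => //; rewrite EFinM.
  under eq_fun do rewrite EFinM.
  apply: cvgeZl => //; apply: cvg_nnsfun_approx => //= t _.
  by rewrite lee_fin.
- by move=> n; apply/measurable_EFinP; apply: measurable_funM.
- by move=> n x _; rewrite lee_fin mulr_ge0.
- move=> x _ a b ab; rewrite lee_fin ler_wpM2l//.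
  by have /lefP := nd_nnsfun_approx (@measurableT _ T') mEg ab; apply.
Qed.

Lemma cond_equiv_posneg (W X : T -> R) :
  mu.-integrable setT (EFin \o W) -> mu.-integrable setT (EFin \o X) ->
  cond_equiv W X ->
  cond_equiv (fun x => W^\+ x + X^\- x)%R (fun x => X^\+ x + W^\- x)%R.
Proof.
move=> iW iX eWX A sA; have mA := sGm sA.
have ipos (f : T -> R) : mu.-integrable setT (EFin \o f) ->
    \int[mu]_(x in A) (f^\+ x)%:E \is a fin_num.
  by move=> iF; apply/integrable_fin_num/integrable_funrpos/(integrableS _ _ _ iF).
have ineg (f : T -> R) : mu.-integrable setT (EFin \o f) ->
    \int[mu]_(x in A) (f^\- x)%:E \is a fin_num.
  by move=> iF; apply/integrable_fin_num/integrable_funrneg/(integrableS _ _ _ iF).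
have split_posneg (f : T -> R) : \int[mu]_(x in A) (f x)%:E =
    \int[mu]_(x in A) (f^\+ x)%:E - \int[mu]_(x in A) (f^\- x)%:E.
  by rewrite integralE funerpos funerneg.
have integralD_posneg (f g : T -> R) : measurable_fun setT f -> measurable_fun setT g ->
    \int[mu]_(x in A) (f^\+ x + g^\- x)%:E =
    \int[mu]_(x in A) (f^\+ x)%:E + \int[mu]_(x in A) (g^\- x)%:E.
  move=> mf mg; under eq_integral do rewrite EFinD.
  rewrite ge0_integralD//.
  - by move=> x _; rewrite lee_fin.
  - exact/measurable_EFinP/measurable_funTS/measurable_funrpos.
  - by move=> x _; rewrite lee_fin.
  - exact/measurable_EFinP/measurable_funTS/measurable_funrneg.
have mW := measurable_int _ iW; have mX := measurable_int _ iX.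
rewrite !integralD_posneg; try exact/measurable_EFinP.
apply/fin_num_sube_eqE; [exact: ipos|exact: ineg|exact: ipos|exact: ineg|].
by rewrite -!split_posneg eWX.
Qed.

Lemma cond_equivN (W X : T -> R) :
  mu.-integrable setT (EFin \o W) -> mu.-integrable setT (EFin \o X) ->
  cond_equiv W X -> cond_equiv (\- W)%R (\- X)%R.
Proof.
move=> iW iX eWX A sA; have mA := sGm sA.
have integralN_EFin (f : T -> R) : mu.-integrable setT (EFin \o f) ->
    \int[mu]_(x in A) (- f x)%R%:E = - \int[mu]_(x in A) (f x)%:E.
  move=> iF; under eq_integral do rewrite EFinN.
  have iFA : mu.-integrable A (EFin \o f) by exact: integrableS iF.
  rewrite integralN// fin_num_adde_defl// fin_numN.
  exact (integrable_fin_num mA (integrable_funeneg mA iFA)).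
by rewrite /= !integralN_EFin// eWX.
Qed.

Lemma integral_posneg_mul_cond (W X : T -> R) (g : T' -> R) :
  mu.-integrable setT (EFin \o W) -> mu.-integrable setT (EFin \o X) ->
  cond_equiv W X -> (forall x, 0 <= g x)%R -> measurable_fun setT g ->
  \int[mu]_x (g x * W^\+ x)%:E + \int[mu]_x (g x * X^\- x)%:E =
  \int[mu]_x (g x * X^\+ x)%:E + \int[mu]_x (g x * W^\- x)%:E.
Proof.
move=> iW iX eWX g0 mg.
have mgT := measurable_fun_sigma_sub mg.
have mW : measurable_fun setT W by exact/measurable_EFinP/(measurable_int mu).
have mX : measurable_fun setT X by exact/measurable_EFinP/(measurable_int mu).
have integralD_mul (f h : T -> R) : measurable_fun setT f -> measurable_fun setT h ->
    (forall x, 0 <= f x)%R -> (forall x, 0 <= h x)%R ->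
    \int[mu]_x (g x * f x)%:E + \int[mu]_x (g x * h x)%:E =
    \int[mu]_x ((f x + h x) * g x)%:E.
  move=> mf mh f0 h0; rewrite -ge0_integralD//.
  - by apply: eq_integral => x _; rewrite -EFinD mulrDl !(mulrC (g x)).
  - by move=> x _; rewrite lee_fin mulr_ge0.
  - exact/measurable_EFinP/measurable_funM.
  - by move=> x _; rewrite lee_fin mulr_ge0.
  - exact/measurable_EFinP/measurable_funM.
rewrite !integralD_mul//; try exact: measurable_funrpos; try exact: measurable_funrneg.
apply: ge0_integral_mul_cond => //; last exact: cond_equiv_posneg.
- by apply: measurable_funD; [exact: measurable_funrpos|exact: measurable_funrneg].
- by apply: measurable_funD; [exact: measurable_funrpos|exact: measurable_funrneg].
- by move=> x; rewrite addr_ge0.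
- by move=> x; rewrite addr_ge0.
Qed.

(* Conditional Jensen for [x |-> max x 0]: test [integral_posneg_mul_cond]
   against [g * \1_(W > 0)]. *)
Lemma integral_funrpos_mul_le (W X : T -> R) (g : T' -> R) :
  measurable_fun setT (W : T' -> R) ->
  mu.-integrable setT (EFin \o W) -> mu.-integrable setT (EFin \o X) ->
  cond_equiv W X -> (forall x, 0 <= g x)%R -> measurable_fun setT g ->
  \int[mu]_x (g x * W^\+ x)%:E <= \int[mu]_x (g x * X^\+ x)%:E.
Proof.
move=> mW iW iX eWX g0 mg.
pose B := (W : T' -> R) @^-1` `]0%R, +oo[.
have mB : measurable (B : set T').
  by rewrite -[B]setTI; apply: mW => //; exact: measurable_itv.
pose gB x := (g x * \1_B x)%R.
have mgB : measurable_fun setT gB.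
  by apply: measurable_funM => //; exact: measurable_indic.
have gB0 x : (0 <= gB x)%R by rewrite mulr_ge0.
have gB_le x : (gB x <= g x)%R by rewrite ler_piMr// indicE lern1 leq_b1.
have inB x : (x \in B) = (0 < W x)%R.
  by apply/idP/idP; rewrite in_setE /B /= in_itv/= andbT.
have gB_pos x : (gB x * W^\+ x = g x * W^\+ x)%R.
  rewrite /gB indicE inB; case: ltP => [_|Wx]; first by rewrite mulr1.
  by rewrite /funrpos (max_idPr Wx) !mulr0.
have gB_neg x : (gB x * W^\- x = 0)%R.
  rewrite /gB indicE inB; case: ltP => [Wx|_]; last by rewrite mulr0 mul0r.
  by rewrite /funrneg (max_idPr _) ?mulr0// oppr_le0 ltW.
have mX : measurable_fun setT X by exact/measurable_EFinP/(measurable_int mu).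
have := integral_posneg_mul_cond iW iX eWX gB0 mgB.
under eq_integral do rewrite gB_pos; under [e in _ = _ + e]eq_integral do rewrite gB_neg.
rewrite integral0 adde0 => eq_gB.
have gB_X_neg0 : 0 <= \int[mu]_x (gB x * X^\- x)%:E.
  by apply: integral_ge0 => x _; rewrite lee_fin mulr_ge0.
apply: le_trans (leeDl _ gB_X_neg0) _; rewrite eq_gB.
apply: ge0_le_integral => //.
- by move=> x _; rewrite lee_fin mulr_ge0.
- apply/measurable_EFinP/measurable_funM; last exact: measurable_funrpos.
  exact: measurable_fun_sigma_sub.
- apply/measurable_EFinP/measurable_funM; last exact: measurable_funrpos.
  exact: measurable_fun_sigma_sub.
- by move=> x _; rewrite lee_fin ler_wpM2r.
Qed.
Lemma integral_funrneg_mul_le (W X : T -> R) (g : T' -> R) :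
  measurable_fun setT (W : T' -> R) ->
  mu.-integrable setT (EFin \o W) -> mu.-integrable setT (EFin \o X) ->
  cond_equiv W X -> (forall x, 0 <= g x)%R -> measurable_fun setT g ->
  \int[mu]_x (g x * W^\- x)%:E <= \int[mu]_x (g x * X^\- x)%:E.
Proof.
move=> mW iW iX eWX g0 mg; rewrite -!funrposN.
apply: integral_funrpos_mul_le => //; first exact: measurable_funN.
- exact: (integrableN iW).
- exact: (integrableN iX).
- exact: cond_equivN.
Qed.

End measure.

Section probability.
Variable P : probability T R.
Local Open Scope ereal_scope.

Lemma EQ_cond_equiv (X W Z W' : T -> R) :
  P.-integrable setT (EFin \o X) ->
  measurable_fun setT (W : T' -> R) -> P.-integrable setT (EFin \o W) ->
  cond_equiv P W X ->
  measurable_fun setT Z -> (forall x, 0 <= Z x)%R ->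
  measurable_fun setT (W' : T' -> R) -> (forall x, 0 <= W' x)%R ->
  cond_equiv P W' Z ->
  \int[P]_x (W' x * `|X x|)%:E < +oo ->
  EQ P W' X = EQ P Z W.
Proof.
move=> iX mW iW eWX mZ Z0 mW' W'0 eW'Z W'X_lty.
have mX : measurable_fun setT X by exact/measurable_EFinP/(measurable_int P).
have W'_lty (f : T -> R) : measurable_fun setT f -> (forall x, 0 <= f x)%R ->
    (forall x, f x <= `|X x|)%R -> \int[P]_x (W' x * f x)%:E < +oo.
  move=> mf f0 fX; apply: le_lt_trans W'X_lty; apply: ge0_le_integral => //.
  - by move=> x _; rewrite lee_fin mulr_ge0.
  - apply/measurable_EFinP/measurable_funM => //; exact: measurable_fun_sigma_sub.
  - apply/measurable_EFinP/measurable_funM; first exact: measurable_fun_sigma_sub.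
    exact: measurableT_comp.
  - by move=> x _; rewrite lee_fin ler_wpM2l.
have W'Xpos := W'_lty _ (measurable_funrpos mX) (funrpos_ge0 X) (funrpos_le_normr X).
have W'Xneg := W'_lty _ (measurable_funrneg mX) (funrneg_ge0 X) (funrneg_le_normr X).
have W'Wpos := le_lt_trans (integral_funrpos_mul_le mW iW iX eWX W'0 mW') W'Xpos.
have W'Wneg := le_lt_trans (integral_funrneg_mul_le mW iW iX eWX W'0 mW') W'Xneg.
have ZW'E (f : T' -> R) : measurable_fun setT f -> (forall x, 0 <= f x)%R ->
    \int[P]_x (Z x * f x)%:E = \int[P]_x (W' x * f x)%:E.
  move=> mf f0; apply/esym/ge0_integral_mul_cond => //.
  exact: measurable_fun_sigma_sub.
have fin (f : T -> R) : (forall x, 0 <= f x)%R ->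
    \int[P]_x (W' x * f x)%:E < +oo -> \int[P]_x (W' x * f x)%:E \is a fin_num.
  move=> f0 lty; rewrite ge0_fin_numE// integral_ge0// => x _.
  by rewrite lee_fin mulr_ge0.
rewrite /EQ /= (ZW'E _ (measurable_funrpos mW) (funrpos_ge0 W)).
rewrite (ZW'E _ (measurable_funrneg mW) (funrneg_ge0 W)).
rewrite (lt_eqF W'Xneg) (lt_eqF W'Wneg); apply/fin_num_sube_eqE.
- exact: fin (funrpos_ge0 X) W'Xpos.
- exact: fin (funrneg_ge0 X) W'Xneg.
- exact: fin (funrpos_ge0 W) W'Wpos.
- exact: fin (funrneg_ge0 W) W'Wneg.
- by symmetry; exact: integral_posneg_mul_cond.
Qed.

End probability.

Section existence.
Variable mu : {finite_measure set T -> \bar R}.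
Variable V : T -> R.
Hypotheses (V0 : forall x, (0 <= V x)%R) (iV : mu.-integrable setT (EFin \o V)).
Local Open Scope ereal_scope.

Let mV : measurable_fun setT V.
Proof. exact/measurable_EFinP/(measurable_int mu). Qed.

Definition restr_sigma : set T' -> \bar R := mu.

Let restr_sigma0 : restr_sigma set0 = 0. Proof. exact: measure0. Qed.
Let restr_sigma_ge0 A : 0 <= restr_sigma A. Proof. exact: measure_ge0. Qed.
Let restr_sigma_sigma_additive : semi_sigma_additive restr_sigma.
Proof.
move=> F mF tF mUF; apply: measure_semi_sigma_additive => //.
- by move=> n; apply: sGm; exact: mF.
- exact: sGm.
Qed.
HB.instance Definition _ := isMeasure.Build _ T' R restr_sigma
  restr_sigma0 restr_sigma_ge0 restr_sigma_sigma_additive.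

Let restr_sigma_fin : fin_num_fun restr_sigma.
Proof. by move=> A mA; rewrite fin_num_measure//; exact: sGm. Qed.
HB.instance Definition _ := Measure_isFinite.Build _ T' R restr_sigma
  restr_sigma_fin.

Definition density_sigma : set T' -> \bar R :=
  fun A => \int[mu]_(x in A) (V x)%:E.

Let density_sigma0 : density_sigma set0 = 0. Proof. exact: integral_set0. Qed.
Let density_sigma_ge0 A : 0 <= density_sigma A.
Proof. by apply: integral_ge0 => x _; rewrite lee_fin. Qed.
Let density_sigma_sigma_additive : semi_sigma_additive density_sigma.
Proof.
move=> F mF tF mUF; apply: (@semi_sigma_additive_nng_induced _ _ _ mu (EFin \o V)).
- exact/measurable_EFinP.
- by move=> x; rewrite /= lee_fin.
- by move=> n; apply: sGm; exact: mF.
- by [].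
- exact: sGm.
Qed.
HB.instance Definition _ := isMeasure.Build _ T' R density_sigma
  density_sigma0 density_sigma_ge0 density_sigma_sigma_additive.

Let density_sigma_fin : fin_num_fun density_sigma.
Proof.
move=> A /sGm mA.
exact (integrable_fin_num mA (integrableS measurableT mA (@subsetT _ A) iV)).
Qed.
HB.instance Definition _ := Measure_isFinite.Build _ T' R density_sigma
  density_sigma_fin.

Let density_sigma_dominates : density_sigma `<< restr_sigma.
Proof.
apply/null_content_dominatesP => A mA muA.
rewrite /density_sigma null_set_integral//; first exact: sGm.
exact/measurable_EFinP/measurable_funTS.
Qed.

Lemma exists_cond_equiv : exists V' : T' -> R,
  [/\ forall x, (0 <= V' x)%R, measurable_fun setT V' & cond_equiv mu V' V].
Proof.
have [f [f0 ffin fint fE]] := radon_nikodym_sigma_finite density_sigma_dominates.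
have mf : measurable_fun setT f := measurable_int _ fint.
have fK : EFin \o (fun x => fine (f x)) = f by apply/funext => x; rewrite /= fineK.
exists (fun x => fine (f x)); split.
- by move=> x; exact: fine_ge0.
- by apply/measurable_EFinP; rewrite fK.
move=> A sA; rewrite -[RHS]/(density_sigma A) fE//.
pose phi := fun x : T => x : T'.
have mphi : measurable_fun setT phi by move=> _ B mB; rewrite setTI; exact: sGm.
(* [restr_sigma] is the image of [mu] under the identity [T -> T']. *)
symmetry; transitivity (\int[pushforward mu phi]_(x in A) f x); first by [].
rewrite ge0_integral_pushforward//.
- by apply: eq_integral => x _; rewrite /= fineK.
- exact: measurable_funS mf.
Qed.

End existence.
End sigma_sub.

Section utility.
Context d (T : measurableType d) (R : realType) (P : probability T R).
Local Open Scope ereal_scope.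

Lemma integrable_density (Z : T -> R) : is_density P Z ->
  P.-integrable setT (EFin \o Z).
Proof.
move=> [mZ Z0 Z1]; apply/integrableP; split; first exact/measurable_EFinP.
by under eq_integral do rewrite /= ger0_norm//; rewrite Z1 ltry.
Qed.

Lemma L1s_integral_lty (C : set (T -> R)) (X Z : T -> R) :
  measurable_fun setT X -> L1s P C X -> C Z -> is_density P Z ->
  \int[P]_x (Z x * `|X x|)%:E < +oo.
Proof.
move=> mX /fine_cvgP[sup_fin _] CZ [mZ Z0 Z1].
case: sup_fin => N _ /(_ N (leqnn N)) supN_fin.
pose tail x := (`|X x| * (if N%:R < `|X x| then 1 else 0))%R.
have mtail : measurable_fun setT tail.
  apply: measurable_funM; first exact: measurableT_comp.
  apply: measurable_fun_ifT => //; apply: measurable_fun_ltr => //.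
  exact: measurableT_comp.
have tail0 x : (0 <= tail x)%R by rewrite mulr_ge0//; case: ifP.
have Ztail_lty : \int[P]_x (Z x * tail x)%:E < +oo.
  apply: (@le_lt_trans _ _ (ereal_sup [set \int[P]_x (Z' x * tail x)%:E | Z' in C])).
    by apply: ereal_sup_ubound; exists Z.
  by rewrite ltey_eq supN_fin.
have ZX_le x : (Z x * `|X x| <= N%:R * Z x + Z x * tail x)%R.
  rewrite /tail; case: ifPn => [_|]; first by rewrite mulr1 lerDr mulr_ge0.
  by rewrite -leNgt mulr0 mulr0 addr0 mulrC => /ler_wpM2r; apply.
apply: (@le_lt_trans _ _ (\int[P]_x ((N%:R * Z x)%:E + (Z x * tail x)%:E))).
  apply: ge0_le_integral => //.
  - by move=> x _; rewrite lee_fin mulr_ge0.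
  - by apply/measurable_EFinP/measurable_funM => //; exact: measurableT_comp.
  - apply: emeasurable_funD; apply/measurable_EFinP; first exact: measurable_funM.
    exact: measurable_funM.
  - by move=> x _; rewrite -EFinD lee_fin.
rewrite ge0_integralD//.
- under eq_integral do rewrite EFinM.
  rewrite ge0_integralZl_EFin//; [|by move=> x _; rewrite lee_fin|exact/measurable_EFinP].
  have -> : \int[P]_x (Z x)%:E = 1 by exact Z1.
  by rewrite mule1 lte_add_pinfty// ltry.
- by move=> x _; rewrite lee_fin mulr_ge0.
- exact/measurable_EFinP/measurable_funM.
- by move=> x _; rewrite lee_fin mulr_ge0.
- exact/measurable_EFinP/measurable_funM.
Qed.

Lemma sub_determining_set (u : (T -> R) -> \bar R) (D0 : set (T -> R)) :
  (forall Z, D0 Z -> is_density P Z) ->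
  (forall X, measurable_fun setT X -> u X = ereal_inf [set EQ P Z X | Z in D0]) ->
  D0 `<=` determining_set P u.
Proof.
move=> D0d uE Z D0Z; split=> [|X mX]; first exact: D0d.
by rewrite uE//; apply: ereal_inf_lbound; exists Z.
Qed.

Definition sigmaY_gen n (Y : 'I_n -> T -> R) : set (set T) :=
  [set A | exists i B, measurable B /\ A = Y i @^-1` B].

Lemma sigmaY_measurable n (Y : 'I_n -> T -> R) :
  (forall i, measurable_fun setT (Y i)) -> sigmaY Y `<=` measurable.
Proof.
move=> mY; apply: smallest_sub; first exact: sigma_algebra_measurable.
by move=> _ [i [B [mB ->]]]; rewrite -[_ @^-1` _]setTI; exact: mY.
Qed.

Lemma measurable_sigmaY n (Y : 'I_n -> T -> R) (V : T -> R) :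
  (forall B, measurable B -> sigmaY Y (V @^-1` B)) ->
  measurable_fun setT (V : g_sigma_algebraType (sigmaY_gen Y) -> R).
Proof. by move=> mV _ B mB; rewrite setTI; exact: mV. Qed.

Lemma EQ_cond_exp n (Y : 'I_n -> T -> R) (X W Z W' : T -> R) :
  (forall i, measurable_fun setT (Y i)) -> cond_exp P Y X W ->
  is_density P Z -> is_density P W' -> cond_exp P Y Z W' ->
  \int[P]_x (W' x * `|X x|)%:E < +oo -> EQ P W' X = EQ P Z W.
Proof.
move=> mY [iX iW mW eWX] [mZ Z0 _] [_ W'0 _] [_ _ mW' eW'Z].
apply: (EQ_cond_equiv (sigmaY_measurable mY)) => //; exact: measurable_sigmaY.
Qed.

Lemma exists_cond_exp_density n (Y : 'I_n -> T -> R) (Z : T -> R) :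
  (forall i, measurable_fun setT (Y i)) -> is_density P Z ->
  exists2 W', is_density P W' & cond_exp P Y Z W'.
Proof.
move=> mY dZ; have [_ Z0 Z1] := dZ.
have [W' [W'0 mW' eW'Z]] :=
  exists_cond_equiv (sigmaY_measurable mY) Z0 (integrable_density dZ).
have dW' : is_density P W'.
  split => //; first exact: measurable_fun_sigma_sub (sigmaY_measurable mY) _ mW'.
  by rewrite -Z1 -eW'Z//; exact: (@measurableT _ (g_sigma_algebraType (sigmaY_gen Y))).
exists W' => //; split => //; try exact: integrable_density.
by move=> B mB; have := mW' measurableT B mB; rewrite setTI.
Qed.

End utility.

Theorem theorem3p3 (d : measure_display) (T : measurableType d) (R : realType)
  (P : probability T R) (u : (T -> R) -> \bar R) (n : nat)
  (Y : 'I_n -> T -> R) :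
  coherent_utility P u ->
  (forall i, measurable_fun setT (Y i)) ->
  forall X : T -> R, measurable_fun setT X ->
  L1s P (determining_set P u) X ->
  L1s P (cond_set P Y (determining_set P u)) X ->
  P.-integrable setT (EFin \o X) ->
  forall W : T -> R, cond_exp P Y X W ->
  factor_utility P u Y X = u W.
Proof.
move=> [D0 [_ D0d uE]] mY X mX _ L1C _ W cW.
have mW : measurable_fun setT W.
  by case: cW => _ /(measurable_int P)/measurable_EFinP.
have EQ_eq Z W' : determining_set P u Z -> cond_set P Y (determining_set P u) W' ->
    cond_exp P Y Z W' -> EQ P W' X = EQ P Z W.
  move=> [dZ _] cW' eW'Z; apply: EQ_cond_exp mY cW dZ cW'.1 eW'Z _.
  exact: L1s_integral_lty mX L1C cW' cW'.1.
rewrite /factor_utility (uE W mW); apply/eqP; rewrite eq_le; apply/andP; split.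
- apply: le_ereal_inf_tmp => _ [Z D0Z <-].
  have DZ := sub_determining_set D0d uE D0Z.
  have [W' dW' eW'Z] := exists_cond_exp_density mY DZ.1.
  have cW' : cond_set P Y (determining_set P u) W' by split=> //; exists Z.
  by apply: ereal_inf_lbound; exists W' => //; exact: EQ_eq.
- apply: le_ereal_inf_tmp => _ [W' cW' <-]; have [_ [Z DZ eW'Z]] := cW'.
  by rewrite (EQ_eq Z W' DZ cW' eW'Z) -(uE W mW); exact: DZ.2.
Qed.
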